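(* $\mathrm{GL}_4(\mathbb{F}_3)$ does not contain a subgroup isomorphic to $A_5\times V_4$.
   Context: $V_4\cong C_2\times C_2$ is the Klein four-group. *)

From mathcomp Require Import all_boot all_order all_algebra all_fingroup all_solvable.
Set Implicit Arguments. Unset Strict Implicit. Unset Printing Implicit Defensive.

Definition A5 : {group {perm 'I_5}} := Alt_group 'I_5.

Definition V4 : {group ('Z_2 * 'Z_2)%type} := setX_group [set: 'Z_2]%G [set: 'Z_2]%G.

Definition A5xV4 : {group ({perm 'I_5} * ('Z_2 * 'Z_2))%type} := setX_group A5 V4.

Set Warnings "-notation-overridden,-ambiguous-paths".
From mathcomp Require Import all_boot all_order all_algebra all_fingroup all_solvable.
Set Implicit Arguments. Unset Strict Implicit. Unset Printing Implicit Defensive.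

(* An element x of order 5 of A_5 x V_4 commutes with the central V_4, and
   since a faithful image of V_4 in GL_4(F_3) contains at most one scalar
   matrix (-1), it contains an involution Z other than 1 and -1. Then
   F_3^4 = ker (Z - 1) + ker (Z + 1), both summands proper and stable under
   the image M of x. As 5 does not divide |GL_d(F_3)| for d <= 3, M acts
   trivially on each summand, so M = 1, contradicting faithfulness. *)
Import GRing.Theory FinRing.Theory.
Local Open Scope ring_scope.

Section FixedSubspaces.
Variable F : fieldType.

Lemma intertwine_expr p q (R : 'M[F]_(p, q)) (B : 'M_p) (A : 'M_q) j :
  B *m R = R *m A -> B ^+ j *m R = R *m A ^+ j.
Proof.
move=> BR; elim: j => [|j IHj]; first by rewrite !expr0 mul1mx mulmx1.
by rewrite !exprS -!mulmxE -mulmxA IHj !mulmxA BR.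
Qed.

Lemma stablemx_expr_fixed m n k (U : 'M[F]_(m, n)) (A : 'M_n) :
  stablemx U A -> (forall B : 'M[F]_(\rank U), B ^+ k = 1 -> B = 1) ->
  A ^+ k = 1 -> U *m A = U.
Proof.
move=> UA torsion_free Ak.
(* B is the matrix of the restriction of A to U in the basis row_base U. *)
set R := row_base U; pose B := R *m A *m pinvmx R.
have RA : (R *m A <= R)%MS by rewrite stablemx_row_base.
have BR : B *m R = R *m A by rewrite mulmxKpV.
have B1 : B = 1.
  apply/torsion_free/(row_free_inj (row_base_free U)).
  by rewrite /= (intertwine_expr _ BR) Ak mulmx1 mul1mx.
have RA1 : R *m A = R by rewrite -BR B1 mul1mx.
have /submxP[D ->] : (U <= R)%MS by rewrite eq_row_base.
by rewrite -mulmxA RA1.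
Qed.

Lemma fixed_addsmx_full m1 m2 n (U : 'M[F]_(m1, n)) (V : 'M_(m2, n)) A :
  (1%:M <= U + V)%MS -> U *m A = U -> V *m A = V -> A = 1.
Proof.
case/sub_addsmxP=> u def1 UA VA.
by rewrite -[A]mul1mx def1 mulmxDl -!mulmxA UA VA -def1.
Qed.

Lemma involution_kermx_full n (Z : 'M[F]_n) :
  (2 : F) != 0 -> Z * Z = 1 -> (1%:M <= kermx (Z - 1) + kermx (Z + 1))%MS.
Proof.
move=> two_neq0 ZZ.
have -> : 1%:M = 2^-1 *: ((1 + Z) + (1 - Z)) :> 'M[F]_n.
  rewrite addrACA subrr addr0.
  by rewrite -mulr2n -scalerMnr scalerMnl -mulr_natr mulVf // scale1r.
apply: scalemx_sub; apply: addmx_sub_adds; apply/sub_kermxP; rewrite mulmxE.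
  by rewrite mulrDl mul1r mulrBr ZZ mulr1 -opprB addNr.
by rewrite mulrBl mul1r mulrDr ZZ mulr1 [1 + Z]addrC subrr.
Qed.

End FixedSubspaces.

Section CommutingInvolution.
Variables (F : fieldType) (n k : nat).
Hypothesis two_neq0 : (2 : F) != 0.
Hypothesis low_dim_torsion_trivial :
  forall d (B : 'M[F]_d), (d < n)%N -> B ^+ k = 1 -> B = 1.

Lemma kermx_commuting_fixed (c M : 'M[F]_n) :
  c != 0 -> comm_mx c M -> M ^+ k = 1 -> kermx c *m M = kermx c.
Proof.
move=> c_neq0 cM Mk; apply: stablemx_expr_fixed (comm_mx_stable_ker cM) _ Mk.
move=> B; apply: low_dim_torsion_trivial.
have rank_c_gt0 : (0 < \rank c)%N by rewrite lt0n mxrank_eq0.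
by rewrite mxrank_ker ltn_subrL rank_c_gt0 (leq_trans rank_c_gt0) ?rank_leq_row.
Qed.

Lemma commuting_involution_expr_eq1 (M Z : 'M[F]_n) :
  M ^+ k = 1 -> Z * Z = 1 -> GRing.comm M Z -> Z != 1 -> Z != -1 -> M = 1.
Proof.
move=> Mk ZZ MZ Z_neq1 Z_neqN1.
have [comm_sub1 comm_add1] : comm_mx (Z - 1) M /\ comm_mx (Z + 1) M.
  by rewrite /comm_mx !mulmxE mulrBl mulrBr mulrDl mulrDr MZ mul1r mulr1.
apply: fixed_addsmx_full (involution_kermx_full two_neq0 ZZ) _ _.
  by apply: kermx_commuting_fixed comm_sub1 Mk; rewrite subr_eq0.
by apply: kermx_commuting_fixed comm_add1 Mk; rewrite addr_eq0.
Qed.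

End CommutingInvolution.

(* Stated for the codomain of a morphism: rewriting with the generic val_unitX
   there triggers a very costly unification of group structures. *)
Lemma GLval_morphM (gT : finGroupType) (G : {group gT}) (F : finFieldType) n
    (f : {morphism G >-> {'GL_n.+1[F]}}) x y :
  x \in G -> y \in G -> GLval (f (x * y)%g) = GLval (f x) * GLval (f y).
Proof. by move=> Gx Gy; rewrite morphM. Qed.

Lemma GLval_morphX (gT : finGroupType) (G : {group gT}) (F : finFieldType) n
    (f : {morphism G >-> {'GL_n.+1[F]}}) x j :
  x \in G -> GLval (f (x ^+ j)%g) = GLval (f x) ^+ j.
Proof.
move=> Gx; elim: j => [|j IHj]; first by rewrite expg0 morph1 expr0.
by rewrite expgS GLval_morphM ?groupX // IHj exprS.
Qed.

Lemma injm_GL_commuting_involution (gT : finGroupType) (G : {group gT})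
    (F : finFieldType) n k (f : {morphism G >-> {'GL_n.+1[F]}}) x z :
  ('injm f)%g -> (2 : F) != 0 ->
  (forall d (B : 'M[F]_d), (d <= n)%N -> B ^+ k = 1 -> B = 1) ->
  x \in G -> z \in G -> (x ^+ k = 1)%g -> (z ^+ 2 = 1)%g -> commute x z ->
  z != 1%g -> GLval (f z) != -1 -> x = 1%g.
Proof.
move=> injf two_neq0 low_dim Gx Gz xk zz xz z_neq1 fz_neqN1.
have f_eq1 y : y \in G -> GLval (f y) = 1 -> y = 1%g.
  move=> Gy fy1; apply/eqP; rewrite -(morph_injm_eq1 injf Gy).
  by apply/eqP/val_inj.
apply: (f_eq1 _ Gx).
apply: (commuting_involution_expr_eq1 (n := n.+1) two_neq0 low_dim) fz_neqN1.
- by rewrite -GLval_morphX // xk morph1.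
- by rewrite -expr2 -GLval_morphX // zz morph1.
- by rewrite /GRing.comm -!GLval_morphM // xz.
- by apply: contra_neq z_neq1; apply: f_eq1.
Qed.

Lemma coprime_card_GL_expr_eq1 (F : finFieldType) n k (B : 'M[F]_n.+1) :
  (0 < k)%N -> coprime #|'GL_n.+1[F]%g| k -> B ^+ k = 1 -> B = 1.
Proof.
case: k => // k _ coGk Bk.
have B_unit : B \is a GRing.unit.
  by apply/unitrP; exists (B ^+ k); rewrite -exprS -exprSr Bk.
pose u : {'GL_n.+1[F]} := FinRing.unit _ B_unit.
have uk : (u ^+ k.+1 = 1)%g by apply: val_inj; rewrite val_unitX.
have := expgK coGk (in_setT u); rewrite uk expg1n.
by move/(congr1 val).
Qed.

(* |GL_1(F_3)| = 2, |GL_2(F_3)| = 48 and |GL_3(F_3)| = 11232 are prime to 5. *)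
Lemma F3_mx_expr5_eq1 d (B : 'M['F_3]_d) : (d <= 3)%N -> B ^+ 5 = 1 -> B = 1.
Proof.
case: d B => [|n] B le_n3; first by rewrite [B]flatmx0 [1]flatmx0.
apply: coprime_card_GL_expr_eq1 => //; rewrite card_GL // card_Fp //.
by case: n {B} le_n3 => [|[|[|]]] // _; rewrite unlock.
Qed.

Lemma card_A5xV4 : #|A5xV4| = 240%N.
Proof.
have card_A5 : #|A5| = 60%N.
  apply/eqP; rewrite -(eqn_pmul2l (isT : (0 < 2)%N)).
  by rewrite /A5 card_Alt card_ord.
by rewrite /A5xV4 /V4 /= !cardsX card_A5 !cardsT card_ord.
Qed.

Lemma pair1g_V4_in (v : 'Z_2 * 'Z_2) : pair1g _ v \in A5xV4.
Proof. by case: v => a b; rewrite !in_setX group1 !inE. Qed.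

Lemma pair1g_V4_expg2 (v : 'Z_2 * 'Z_2) : (pair1g {perm 'I_5} v ^+ 2 = 1)%g.
Proof.
have Z2_sq (c : 'Z_2) : (c * c = 1)%g by apply: val_inj; case: c => [[|[|]]].
by case: v => a b; congr (_, (_, _)); [exact: mulg1 | exact: Z2_sq ..].
Qed.

Lemma pair1g_V4_central (x : {perm 'I_5} * ('Z_2 * 'Z_2)) (v : 'Z_2 * 'Z_2) :
  commute x (pair1g _ v).
Proof.
case: x => p [a b]; case: v => c d.
by rewrite /commute; congr (_, (_, _)); [exact: commute1 | exact: Zp_mulgC ..].
Qed.

Theorem lemma3p15 :
  ~ (exists H : {group {'GL_4['F_3]}},
       (H \subset 'GL_4['F_3])%g /\ (H \isog A5xV4)%g).
Proof.
case=> H [_]; rewrite isog_sym => /isogP[f injf _].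
have [x Gx ox] : {x | x \in A5xV4 & #[x]%g = 5%N}.
  by apply: Cauchy; rewrite ?card_A5xV4.
have x_neq1 : x != 1%g by rewrite -order_eq1 ox.
have x5 : (x ^+ 5 = 1)%g by rewrite -[n in (x ^+ n)%g]ox expg_order.
have V4_imageN1 (v : 'Z_2 * 'Z_2) : v != 1%g -> GLval (f (pair1g _ v)) = -1.
  move=> v_neq1; apply/eqP; apply: contraNT x_neq1 => fv_neqN1; apply/eqP.
  apply: (injm_GL_commuting_involution injf isT F3_mx_expr5_eq1 Gx
    (pair1g_V4_in v) x5 (pair1g_V4_expg2 v) (pair1g_V4_central x v)) fv_neqN1.
  by rewrite (morph_injm_eq1 (injm_pair1g _ _)) ?inE.
have := V4_imageN1 (1, 0)%R isT; rewrite -(V4_imageN1 (0, 1)%R isT).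
by move/val_inj/(injmP injf _ _ (pair1g_V4_in _) (pair1g_V4_in _)).
Qed.
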